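(* For every integer $t\ge 2$, $$\lim_{n\to\infty}\frac{l\bigl(2^{t-1}n+2^{t-2}\bigr)}{l\bigl(2^{t-1}n+2^{t-2}-1\bigr)}=\frac{3F(t-1)}{F(t-1)-2}.$$
   Context: For $n\ge 0$, $c(n)=\sum_{i=0}^{n}\left(\binom{n}{i}\bmod 2\right)2^{i}$, the integer whose binary digits form the $n$-th row of Pascal's triangle modulo $2$; one has $c(2n)\equiv 1\pmod 4$, and $l(n)=\frac{c(2n)-1}{4}$. $F(j)=2^{2^j}+1$ is the $j$-th Fermat number. *)

From mathcomp Require Import all_boot.

Definition c (n : nat) : nat :=
  (\sum_(i < n.+1) ('C(n, i) %% 2) * expn 2 i)%N.

(* l(n) = (c(2n) - 1)/4  (exact division since c(2n) = 1 mod 4) *)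
Definition l (n : nat) : nat := ((c (2 * n) - 1) %/ 4)%N.

Definition F (j : nat) : nat := (expn 2 (expn 2 j) + 1)%N.

From mathcomp Require Import all_boot.
From Stdlib Require Import Reals Lia Lra Psatz.
From Coquelicot Require Import Coquelicot.
From mathcomp Require Import zify.
(* Stdlib's [Nat.pow] notation shadows ssrnat's [^] on nat; put [expn] back on top. *)
Import ssrnat.

(* Write [P_n(x)] for the polynomial whose coefficients are the n-th row of
   Pascal's triangle mod 2, so that [c n = P_n(2)].  Mod 2 one has
   (1 + X)^(2k) = (1 + X^2)^k, whence [P_(2k)(x) = P_k(x^2)] and
   [P_(2k+1)(x) = (1 + x) P_k(x^2)].  Iterating along the binary digits of the
   two arguments gives, with [A = 4^(2^(t-2))] and [Q = prod_(j < t-2) (1 + 4^(2^j))],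
   [4 l(m) + 1 = (1 + A) P_n(A^2)] and [4 l(m - 1) + 1 = Q P_n(A^2)] for
   [m = 2^(t-1) n + 2^(t-2)].  As [P_n(A^2) -> oo] the ratio tends to
   [(1 + A) / Q], and the telescoping product [3 Q + 1 = A] together with
   [F(t-1) = A + 1] turns this into [3 F(t-1) / (F(t-1) - 2)]. *)

Open Scope nat_scope.

Definition pascal_row2 (x n : nat) : nat := \sum_(i < n.+1) odd 'C(n, i) * x ^ i.

Lemma c_pascal_row2 n : c n = pascal_row2 2 n.
Proof. by rewrite /c /pascal_row2; apply: eq_bigr => i _; rewrite modn2. Qed.

Lemma odd_binSS n j : odd 'C(n.+2, j.+2) = odd 'C(n, j.+2) (+) odd 'C(n, j).
Proof.
by rewrite !binS !oddD; case: (odd 'C(n, j)); case: (odd 'C(n, j.+1));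
  case: (odd 'C(n, j.+2)).
Qed.

Lemma odd_bin_double_doubleS k i : odd 'C(k.*2, i.*2.+1) = false.
Proof.
elim: k i => [|k IHk] [|i]; rewrite ?bin0n // ?bin1 ?odd_double //.
by rewrite !doubleS odd_binSS -doubleS !IHk.
Qed.

Lemma odd_bin_double k i : odd 'C(k.*2, i.*2) = odd 'C(k, i).
Proof.
elim: k i => [|k IHk] [|i]; rewrite ?bin0 ?bin0n //.
by rewrite !doubleS odd_binSS -doubleS !IHk binS oddD addbC.
Qed.

Lemma odd_bin_doubleS_double k i : odd 'C(k.*2.+1, i.*2) = odd 'C(k, i).
Proof.
case: i => [|i]; first by rewrite !bin0.
by rewrite doubleS binS oddD odd_bin_double_doubleS -doubleS odd_bin_double addbF.
Qed.

Lemma odd_bin_doubleS_doubleS k i : odd 'C(k.*2.+1, i.*2.+1) = odd 'C(k, i).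
Proof. by rewrite binS oddD odd_bin_double_doubleS odd_bin_double. Qed.

Lemma big_ord_double (R : Type) (idx : R) (op : Monoid.law idx) N (f : nat -> R) :
  \big[op/idx]_(i < N.*2) f i = \big[op/idx]_(i < N) op (f i.*2) (f i.*2.+1).
Proof.
elim: N => [|N IHN]; first by rewrite !big_ord0.
by rewrite doubleS !big_ord_recr /= IHN Monoid.mulmA.
Qed.

Lemma pascal_row2_double x k : pascal_row2 x k.*2 = pascal_row2 (x ^ 2) k.
Proof.
have top_zero : \sum_(i < (k.+1).*2) odd 'C(k.*2, i) * x ^ i = pascal_row2 x k.*2.
  by rewrite doubleS big_ord_recr /= bin_small ?ltnSn // addn0.
rewrite -top_zero (big_ord_double _ _ _ k.+1 (fun i => odd 'C(k.*2, i) * x ^ i)).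
apply: eq_bigr => i _ /=.
by rewrite odd_bin_double_doubleS odd_bin_double addn0 -expnM mul2n.
Qed.

Lemma pascal_row2_doubleS x k : pascal_row2 x k.*2.+1 = (1 + x) * pascal_row2 (x ^ 2) k.
Proof.
rewrite /pascal_row2 -doubleS.
rewrite (big_ord_double _ _ _ k.+1 (fun i => odd 'C(k.*2.+1, i) * x ^ i)) big_distrr.
apply: eq_bigr => i _ /=.
rewrite odd_bin_doubleS_doubleS odd_bin_doubleS_double -expnM mul2n expnS.
by rewrite mulnDl mul1n [x * (_ * _)]mulnCA.
Qed.

Lemma pascal_row2_mul_expn2 s x n :
  pascal_row2 x (2 ^ s * n) = pascal_row2 (x ^ 2 ^ s) n.
Proof.
elim: s x n => [|s IHs] x n; first by rewrite mul1n expn1.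
by rewrite expnSr -mulnA mul2n IHs pascal_row2_double expnM.
Qed.

Definition fermat_prod (x s : nat) : nat := \prod_(j < s) (1 + x ^ 2 ^ j).

Lemma mul_fermat_prod x s : x * fermat_prod x.+1 s + 1 = x.+1 ^ 2 ^ s.
Proof.
rewrite /fermat_prod; elim: s => [|s IHs]; first by rewrite big_ord0 muln1 addn1.
rewrite big_ord_recr /= expnSr expnM -IHs.
set P := \prod_(j < s) _; set y := x.+1 ^ 2 ^ s; nia.
Qed.

Lemma pascal_row2_mul_expn2_add_pred s x n :
  pascal_row2 x (2 ^ s * n + (2 ^ s).-1)
  = fermat_prod x s * pascal_row2 (x ^ 2 ^ s) n.
Proof.
rewrite /fermat_prod.
elim: s x => [|s IHs] x; first by rewrite big_ord0 !mul1n addn0 expn1.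
have -> : 2 ^ s.+1 * n + (2 ^ s.+1).-1 = (2 ^ s * n + (2 ^ s).-1).*2.+1.
  by have := expn_gt0 2 s; rewrite expnS; lia.
rewrite pascal_row2_doubleS IHs big_ord_recl expn1 mulnA -expnM -expnS.
by congr (_ * _ * _); apply: eq_bigr => j _; rewrite -expnM -expnS.
Qed.

Lemma pascal_row2_ge x n : x ^ n <= pascal_row2 x n.
Proof. by rewrite /pascal_row2 big_ord_recr /= binn mul1n leq_addl. Qed.

Lemma pascal_row2_4_l k : pascal_row2 4 k = 4 * l k + 1.
Proof.
have head_tail : pascal_row2 4 k = 4 * \sum_(i < k) odd 'C(k, i.+1) * 4 ^ i + 1.
  rewrite /pascal_row2 big_ord_recl bin0 addnC big_distrr /=; congr (_ + _).
  by apply: eq_bigr => i _; rewrite expnS mulnCA.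
by rewrite /l c_pascal_row2 mul2n pascal_row2_double head_tail addnK mulKn.
Qed.

Lemma pascal_row2_block_mid s x n :
  pascal_row2 x (2 ^ s.+1 * n + 2 ^ s) = (1 + x ^ 2 ^ s) * pascal_row2 (x ^ 2 ^ s.+1) n.
Proof.
have -> : 2 ^ s.+1 * n + 2 ^ s = 2 ^ s * n.*2.+1 by rewrite expnS; lia.
by rewrite pascal_row2_mul_expn2 pascal_row2_doubleS -expnM -expnSr.
Qed.

Lemma pascal_row2_block_pred s x n :
  pascal_row2 x (2 ^ s.+1 * n + 2 ^ s - 1)
  = fermat_prod x s * pascal_row2 (x ^ 2 ^ s.+1) n.
Proof.
have -> : 2 ^ s.+1 * n + 2 ^ s - 1 = 2 ^ s * n.*2 + (2 ^ s).-1.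
  by have := expn_gt0 2 s; rewrite expnS; lia.
by rewrite pascal_row2_mul_expn2_add_pred pascal_row2_double -expnM -expnSr.
Qed.

Open Scope R_scope.

Lemma Rdiv_div_div_r (x y z : R) : z <> 0 -> x / z / (y / z) = x / y.
Proof.
move=> z_neq0; rewrite /Rdiv Rinv_mult Rinv_inv.
by transitivity (x * / y * (z * / z)); [ring | rewrite Rinv_r // Rmult_1_r].
Qed.

Lemma INR_l k : INR (l k) = (INR (pascal_row2 4 k) - 1) / 4.
Proof. by rewrite pascal_row2_4_l plus_INR mult_INR /=; field. Qed.

Lemma is_lim_seq_pascal_row2 x :
  (1 < x)%N -> is_lim_seq (fun n => INR (pascal_row2 x n)) p_infty.
Proof.
move=> x_gt1; apply: (is_lim_seq_le_p_loc INR); last exact: is_lim_seq_INR.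
exists 0%N => n _; apply/le_INR/leP.
exact: ltnW (leq_trans (ltn_expl n x_gt1) (pascal_row2_ge x n)).
Qed.

Lemma is_lim_seq_affine_ratio (a b : R) (p : nat -> R) :
  0 < b -> is_lim_seq p p_infty ->
  is_lim_seq (fun n => (a * p n - 1) / (b * p n - 1)) (a / b).
Proof.
move=> b_gt0 p_oo.
have inv_p : is_lim_seq (fun n => / p n) 0.
  by have := is_lim_seq_inv _ p_infty p_oo ltac:(discriminate).
have [N p_big] := proj2 (is_lim_seq_spec _ _) p_oo (1 + / b).
apply: (is_lim_seq_ext_loc (fun n => (a - / p n) / (b - / p n))).
  exists N => n /p_big p_gt.
  have b_inv : b * / b = 1 by field; lra.
  have inv_b_gt0 : 0 < / b by apply: Rinv_0_lt_compat.
  field; split; nra.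
have -> : a / b = (a - 0) / (b - 0) by rewrite !Rminus_0_r.
apply: is_lim_seq_div'; last by rewrite Rminus_0_r; lra.
- exact: is_lim_seq_minus' (is_lim_seq_const a) inv_p.
- exact: is_lim_seq_minus' (is_lim_seq_const b) inv_p.
Qed.

Close Scope R_scope.

Theorem mainTheorem9 (t : nat) (ht : leq 2 t) :
  is_lim_seq
    (fun n : nat =>
       (INR (l (addn (muln (expn 2 (subn t 1)) n) (expn 2 (subn t 2))))
        / INR (l (subn (addn (muln (expn 2 (subn t 1)) n) (expn 2 (subn t 2))) 1)))%R)
    (Finite (3 * INR (F (subn t 1)) / (INR (F (subn t 1)) - 2))%R).
Proof.
case: t ht => [|[|u]] // _; rewrite !subSS !subn0.
set A := (4 ^ 2 ^ u)%N; set Q := fermat_prod 4 u.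
set P := fun n => INR (pascal_row2 (4 ^ 2 ^ u.+1) n).
have Q_gt0 : (0 < INR Q)%R.
  by apply/lt_0_INR/ltP; rewrite prodn_gt0 // => j; rewrite addn_gt0.
have A_Q : INR A = (3 * INR Q + 1)%R.
  by rewrite /A -(mul_fermat_prod 3 u) plus_INR mult_INR -/Q /=; ring.
have F_A : INR (F u.+1) = (INR A + 1)%R.
  by rewrite /F expnS expnM plus_INR.
apply: (is_lim_seq_ext (fun n => ((1 + INR A) * P n - 1) / (INR Q * P n - 1))%R).
  move=> n; rewrite !INR_l Rdiv_div_div_r; last lra.
  by rewrite pascal_row2_block_mid pascal_row2_block_pred !mult_INR plus_INR.
have -> : (3 * INR (F u.+1) / (INR (F u.+1) - 2) = (1 + INR A) / INR Q)%R.
  by rewrite F_A A_Q; field; lra.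
apply: is_lim_seq_affine_ratio Q_gt0 (is_lim_seq_pascal_row2 _ _).
by rewrite -[1%N](expn0 4) ltn_exp2l // expn_gt0.
Qed.
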